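(* Let $D$ be a square-free integer, let $\mathbb{Z}[\sqrt{D}]$ denote the ring of integers of $\mathbb{Q}(\sqrt{D})$, and let $p$ be a prime integer which is irreducible but not prime in $\mathbb{Z}[\sqrt{D}]$. Let $z_0\in I_p(D)$ be a fundamental solution of the generalized Pell equation $x^2-y^2D=\lVert z_0\rVert$. If $z\in I_p(D)$ is in the same equivalence class as $z_0$, i.e. $z=z_0u$ for some unit $u$ of $\mathbb{Z}[\sqrt{D}]$ with $\lVert u\rVert=1$, then $A(p,z_0)\in \operatorname{ID}_2(\mathbb{Z}[\sqrt{D}])$ if and only if $A(p,z)\in\operatorname{ID}_2(\mathbb{Z}[\sqrt{D}])$. Furthermore, $A(p,z_0)$ has property (CZ) if and only if $A(p,z)$ has property (CZ).
   Context: Here $\mathbb{Z}[\sqrt{D}]=\{a+b\sqrt{D}:a,b\in\mathbb{Z}\}$ if $D\equiv 2,3 \pmod 4$ and $\mathbb{Z}[\sqrt{D}]=\{\frac{a+b\sqrt{D}}{2}:a,b\in\mathbb{Z},\ a\equiv b \pmod 2\}$ if $D\equiv 1\pmod 4$. $\bar z$ denotes the conjugate and $\lVert z\rVert=z\bar z$ the norm. $I_p(D)$ is the set of all non-unit $z\in\mathbb{Z}[\sqrt{D}]$ such that $z\notin\langle p\rangle$ but there exists $m\notin\langle p\rangle$ with $zm\in\langle p\rangle$ (for such $z$, $p$ divides $\lVert z\rVert$). For $z\in I_p(D)$, $A(p,z)=\begin{pmatrix} p & z\\ \bar z & \lVert z\rVert/p\end{pmatrix}$. For a ring $R$, $\operatorname{ID}_2(R)$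 is the set of $2\times 2$ matrices over $R$ that can be written as a product of (finitely many) idempotent matrices in $\mathbb{M}_2(R)$. A matrix $A(p,z)$ has property (CZ) if there exist $a,b,c\in\mathbb{Z}[\sqrt{D}]$ with $a(1-a)=bc$ such that $A(p,z)=\begin{pmatrix} a&b\\ c&1-a\end{pmatrix}\begin{pmatrix}\bar a&\bar c\\ \bar b&1-\bar a\end{pmatrix}$. *)

From HB Require Import structures.
From mathcomp Require Import all_boot all_order all_algebra.
From mathcomp Require Import ring.
Set Implicit Arguments. Unset Strict Implicit. Unset Printing Implicit Defensive.
Import Order.TTheory GRing.Theory Num.Theory.
Local Open Scope ring_scope.

Definition omt (D : int) : int := if (D %% 4)%Z == 1 then 1 else 0.
Definition omn (D : int) : int := if (D %% 4)%Z == 1 then ((D - 1) %/ 4)%Z else D.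

Definition OD (D : int) : Type := (int * int)%type.
HB.instance Definition _ D := Choice.on (OD D).
Definition od_zero D : OD D := (0, 0).
Definition od_opp D (x : OD D) : OD D := (- x.1, - x.2).
Definition od_add D (x y : OD D) : OD D := (x.1 + y.1, x.2 + y.2).
Lemma od_addA D : associative (@od_add D).
Proof. by move=> [a b] [c d] [e f]; rewrite /od_add /=; congr pair; ring. Qed.
Lemma od_addC D : commutative (@od_add D).
Proof. by move=> [a b] [c d]; rewrite /od_add /=; congr pair; ring. Qed.
Lemma od_add0 D : left_id (@od_zero D) (@od_add D).
Proof. by move=> [a b]; rewrite /od_add /=; congr pair; ring. Qed.
Lemma od_addN D : left_inverse (@od_zero D) (@od_opp D) (@od_add D).
Proof. by move=> [a b]; rewrite /od_add /od_opp /od_zero /=; congr pair; ring. Qed.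
HB.instance Definition _ D :=
  GRing.isZmodule.Build (OD D) (@od_addA D) (@od_addC D) (@od_add0 D) (@od_addN D).

Definition od_one D : OD D := (1, 0).
Definition od_mul D (x y : OD D) : OD D :=
  (x.1 * y.1 + x.2 * y.2 * omn D, x.1 * y.2 + x.2 * y.1 + x.2 * y.2 * omt D).

Lemma od_mulA D : associative (@od_mul D).
Proof. by move=> [a b] [c d] [e f]; rewrite /od_mul /=; congr pair; ring. Qed.
Lemma od_mulC D : commutative (@od_mul D).
Proof. by move=> [a b] [c d]; rewrite /od_mul /=; congr pair; ring. Qed.
Lemma od_mul1 D : left_id (@od_one D) (@od_mul D).
Proof. by move=> [a b]; rewrite /od_mul /=; congr pair; ring. Qed.
Lemma od_mulDl D : left_distributive (@od_mul D) +%R.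
Proof.
move=> [a b] [c d] [e f].
change (@od_mul D (od_add (a,b) (c,d)) (e,f) = od_add (@od_mul D (a,b) (e,f)) (@od_mul D (c,d) (e,f))).
by rewrite /od_mul /od_add /=; congr pair; ring.
Qed.
Lemma od_one_neq0 D : @od_one D != 0.
Proof. by []. Qed.

HB.instance Definition _ D := GRing.Zmodule_isComNzRing.Build (OD D)
  (@od_mulA D) (@od_mulC D) (@od_mul1 D) (@od_mulDl D) (@od_one_neq0 D).


Definition squarefree (D : int) : Prop :=
  D != 0 /\ forall q : nat, prime q -> ~ ((q * q)%:Z %| D)%Z.

(* (a, b) : OD D represents a + b w, with w = sqrt D if D <> 1 mod 4 and
   w = (1 + sqrt D)/2 if D = 1 mod 4; then conj w = omt D - w. *)
Definition od_conj D (x : OD D) : OD D := (x.1 + x.2 * omt D, - x.2).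
(* the norm ||x|| = x * conj x, which is an integer *)
Definition od_norm D (x : OD D) : int :=
  x.1 ^+ 2 + x.1 * x.2 * omt D - x.2 ^+ 2 * omn D.

(* Writing x = (X + Y sqrt D)/2 (X, Y integers; X = 2a + b, Y = b if
   D = 1 mod 4), resp. x = X + Y sqrt D (X = a, Y = b otherwise): *)
Definition pell_X D (x : OD D) : int :=
  if omt D == 1 then 2 * x.1 + x.2 else x.1.
Definition pell_Y D (x : OD D) : int := x.2.

Definition is_unit (R : comNzRingType) (x : R) : Prop := exists y, x * y = 1.
Definition rdvd (R : comNzRingType) (x y : R) : Prop := exists w, y = x * w.
Definition irreducible_elt (R : comNzRingType) (x : R) : Prop :=
  [/\ x != 0, ~ is_unit x & forall a b, x = a * b -> is_unit a \/ is_unit b].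
Definition prime_elt (R : comNzRingType) (x : R) : Prop :=
  [/\ x != 0, ~ is_unit x &
     forall a b, rdvd x (a * b) -> rdvd x a \/ rdvd x b].

Definition Ip D (p : nat) (z : OD D) : Prop :=
  [/\ ~ is_unit z, ~ rdvd (p%:R : OD D) z &
      exists m : OD D, ~ rdvd (p%:R : OD D) m /\ rdvd (p%:R : OD D) (z * m)].

(** * Fundamental solution of the generalized Pell equation x^2 - D y^2 = ||z0||
   (Nagell's convention): in the class {z0 u : u unit, ||u|| = 1} of z0,
   z0 has the least nonnegative y-coordinate, and among the elements of the
   class with that y-coordinate, the largest x-coordinate (i.e. x >= 0). *)
Definition fundamental D (z0 : OD D) : Prop :=
  0 <= pell_Y z0 /\
  forall u : OD D, is_unit u -> od_norm u = 1 ->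
    0 <= pell_Y (z0 * u) ->
    pell_Y z0 <= pell_Y (z0 * u) /\
    (pell_Y (z0 * u) = pell_Y z0 -> pell_X (z0 * u) <= pell_X z0).

Definition mx2 (R : Type) (a b c d : R) : 'M[R]_2 :=
  \matrix_(i < 2, j < 2)
    if (i : nat) == 0%N then (if (j : nat) == 0%N then a else b)
    else (if (j : nat) == 0%N then c else d).

Definition Amx D (p : nat) (z : OD D) : 'M[OD D]_2 :=
  mx2 (p%:R) z (od_conj z) ((od_norm z %/ p%:Z)%Z)%:~R.

Definition ID2 (R : comNzRingType) (A : 'M[R]_2) : Prop :=
  exists s : seq 'M[R]_2,
    all (fun M => M *m M == M) s /\ A = foldr (fun M N => M *m N) 1%:M s.

Definition CZ D (A : 'M[OD D]_2) : Prop :=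
  exists a b c : OD D, a * (1 - a) = b * c /\
    A = mx2 a b c (1 - a) *m mx2 (od_conj a) (od_conj c) (od_conj b) (1 - od_conj a).

From HB Require Import structures.
From mathcomp Require Import all_boot all_order all_algebra.
From mathcomp Require Import ring.
Set Implicit Arguments. Unset Strict Implicit. Unset Printing Implicit Defensive.
Import Order.TTheory GRing.Theory Num.Theory.
Local Open Scope ring_scope.

(* If ||u|| = 1 then u^-1 = conj u, and A(p, z u) is the conjugate of A(p, z)
   by the invertible matrix diag(1, u).  Conjugation by an invertible matrix
   preserves products of idempotents, and conjugating the two factors of a
   (CZ) decomposition of A(p, z) by diag(1, u) gives a (CZ) decomposition of
   A(p, z u) with b, c replaced by b u, conj(u) c. *)

Section Mx2.
Variable R : comNzRingType.

Lemma mx2_mul (a b c d e f g h : R) :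
  mx2 a b c d *m mx2 e f g h =
  mx2 (a * e + b * g) (a * f + b * h) (c * e + d * g) (c * f + d * h).
Proof.
apply/matrixP=> i j; rewrite !mxE !big_ord_recl big_ord0 !mxE addr0.
by case: i => [[|[|i]] Hi] //=; case: j => [[|[|j]] Hj].
Qed.

Lemma mx2_1 : (1%:M : 'M[R]_2) = mx2 1 0 0 1.
Proof.
apply/matrixP=> i j; rewrite !mxE.
by case: i => [[|[|i]] Hi] //=; case: j => [[|[|j]] Hj].
Qed.

Lemma mx2_diag_mulV (u v : R) : u * v = 1 -> mx2 1 0 0 u *m mx2 1 0 0 v = 1%:M.
Proof.
by move=> uv1; rewrite mx2_mul mx2_1 uv1 !(mul0r, mulr0, mul1r, addr0, add0r).
Qed.

Lemma mx2_diag_conj_idem (u v a b c : R) : v * u = 1 ->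
  mx2 1 0 0 v *m mx2 a b c (1 - a) *m mx2 1 0 0 u =
  mx2 a (b * u) (v * c) (1 - a).
Proof.
move=> vu1; rewrite !mx2_mul !(mul0r, mulr0, mul1r, mulr1, addr0, add0r).
by congr mx2; rewrite mulrAC vu1 mul1r.
Qed.

Section Conjugation.
Variables P Pi : 'M[R]_2.
Hypotheses (PPi : P *m Pi = 1%:M) (PiP : Pi *m P = 1%:M).

Lemma mulmx_conj (M N : 'M[R]_2) :
  (Pi *m M *m P) *m (Pi *m N *m P) = Pi *m (M *m N) *m P.
Proof. by rewrite !mulmxA -(mulmxA _ P Pi) PPi mulmx1. Qed.

Lemma ID2_conj (A : 'M[R]_2) : ID2 A -> ID2 (Pi *m A *m P).
Proof.
case=> s [s_idem ->]; exists [seq Pi *m M *m P | M <- s]; split.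
  apply/allP=> _ /mapP [M Ms ->]; rewrite mulmx_conj.
  by move/allP: s_idem => /(_ M Ms) /eqP ->.
elim: s {s_idem} => [|M s IH] /=; first by rewrite mulmx1 PiP.
by rewrite -mulmx_conj -IH.
Qed.

End Conjugation.

Lemma ID2_conjE (P Pi A : 'M[R]_2) : P *m Pi = 1%:M -> Pi *m P = 1%:M ->
  ID2 (Pi *m A *m P) <-> ID2 A.
Proof.
move=> PPi PiP; split; last exact: ID2_conj.
by move/(ID2_conj PiP PPi); rewrite !mulmxA PPi mul1mx -mulmxA PPi mulmx1.
Qed.

End Mx2.

Section NormOne.
Variable D : int.

Lemma od_mulE (x y : OD D) : x * y = od_mul x y. Proof. by []. Qed.

Lemma od_conjM (x y : OD D) : od_conj (x * y) = od_conj x * od_conj y.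
Proof. by case: x => a b; case: y => c d; congr pair; rewrite /= /od_mul /=; ring. Qed.

Lemma od_conjK (x : OD D) : od_conj (od_conj x) = x.
Proof. by case: x => a b; congr pair; rewrite /=; ring. Qed.

Lemma od_normM (x y : OD D) : od_norm (x * y) = od_norm x * od_norm y.
Proof. by case: x => a b; case: y => c d; rewrite od_mulE /od_mul /od_norm /=; ring. Qed.

Lemma od_norm_conj (x : OD D) : od_norm (od_conj x) = od_norm x.
Proof. by case: x => a b; rewrite /od_norm /=; ring. Qed.

Lemma od_mul_conj_norm1 (u : OD D) : od_norm u = 1 -> u * od_conj u = 1.
Proof.
case: u => a b; rewrite /od_norm => /= u1.
by congr pair; rewrite /= -?u1; ring.
Qed.

Lemma Amx_mulr_norm1 (p : nat) (z u : OD D) : od_norm u = 1 ->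
  Amx p (z * u) = mx2 1 0 0 (od_conj u) *m Amx p z *m mx2 1 0 0 u.
Proof.
move=> u1; rewrite /Amx !mx2_mul od_normM u1 mulr1 od_conjM.
rewrite !(mul0r, mulr0, mul1r, mulr1, addr0, add0r).
by congr mx2; rewrite mulrC // mulrA od_mul_conj_norm1 ?mul1r.
Qed.

Lemma CZ_diag_conj (u : OD D) (A : 'M[OD D]_2) : od_norm u = 1 ->
  CZ A -> CZ (mx2 1 0 0 (od_conj u) *m A *m mx2 1 0 0 u).
Proof.
move=> u1 [a [b [c [abc ->]]]].
have uu' := od_mul_conj_norm1 u1; have u'u : od_conj u * u = 1 by rewrite mulrC.
exists a, (b * u), (od_conj u * c); split.
  by rewrite abc mulrA -(mulrA b) uu' mulr1.
rewrite -mulmx_conj ?mx2_diag_mulV // !mx2_diag_conj_idem //.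
by rewrite !od_conjM od_conjK [od_conj c * u]mulrC [od_conj u * od_conj b]mulrC.
Qed.

Lemma CZ_diag_conjE (u : OD D) (A : 'M[OD D]_2) : od_norm u = 1 ->
  CZ (mx2 1 0 0 (od_conj u) *m A *m mx2 1 0 0 u) <-> CZ A.
Proof.
move=> u1; split; last exact: CZ_diag_conj.
have u'1 : od_norm (od_conj u) = 1 by rewrite od_norm_conj.
have uu' := od_mul_conj_norm1 u1; have u'u : od_conj u * u = 1 by rewrite mulrC.
move/(CZ_diag_conj u'1); rewrite od_conjK !mulmxA mx2_diag_mulV // mul1mx.
by rewrite -mulmxA mx2_diag_mulV // mulmx1.
Qed.

End NormOne.

Theorem proposition2p4 (D : int) (p : nat) (z0 z u : OD D) :
  squarefree D -> D != 1 ->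
  prime p ->
  irreducible_elt (p%:R : OD D) -> ~ prime_elt (p%:R : OD D) ->
  Ip p z0 -> fundamental z0 ->
  Ip p z -> is_unit u -> od_norm u = 1 -> z = z0 * u ->
  (ID2 (Amx p z0) <-> ID2 (Amx p z)) /\ (CZ (Amx p z0) <-> CZ (Amx p z)).
Proof.
move=> _ _ _ _ _ _ _ _ _ u1 ->; rewrite Amx_mulr_norm1 //.
have uu' := od_mul_conj_norm1 u1.
split; first by rewrite ID2_conjE // mx2_diag_mulV // mulrC.
by rewrite CZ_diag_conjE.
Qed.
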